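(* Let $\mathcal{N}$ be a classical channel from $X$ to $Y$ and $\mathcal{M}$ a classical channel from $X'$ to $Y$, both given in standard form. Then $\mathcal{N}\sim\mathcal{M}$ if and only if $\mathcal{N}=\mathcal{M}$, i.e. their transition matrices are identical (in particular $|X|=|X'|$).
   Context: A classical channel $\mathcal{N}$ from $X$ ($|X|=m$) to $Y$ ($|Y|=n$) has an $n\times m$ column-stochastic transition matrix $N=[\mathbf{p}_1\cdots\mathbf{p}_m]$. For $\mathbf{p}\in\mathrm{Prob}(n)$, $\|\mathbf{p}\|_{(k)}$ denotes the sum of its $k$ largest entries, and $\mathbf{p}\succ\mathbf{q}$ (vector majorization) means $\|\mathbf{p}\|_{(k)}\ge\|\mathbf{q}\|_{(k)}$ for all $k$. $\mathcal{N}$ is in standard form if: (1) the entries of each column are in non-increasing order; (2) the columns are in decreasing lexicographic order: for every $x\in[m-1]$ there is $\ell\in[n]$ with $\|\mathbf{p}_x\|_{(k)}=\|\mathbf{p}_{x+1}\|_{(k)}$ for all $k<\ell$ and $\|\mathbf{p}_x\|_{(\ell)}>\|\mathbf{p}_{x+1}\|_{(\ell)}$; (3) no column is majorized by a convex combination of the other columns. Classical channel majorization: $\mathcal{N}\succ\mathcal{M}$ if $\mathcal{M}=\Theta[\mathcal{N}]$ for a random permutation superchannel, i.e. $\Theta[\mathcal{N}]=\mathcal{D}^{YZ\to Y}\circ(\mathcal{N}\otimes\mathrm{id}^Z)\circ\mathcal{S}^{X'\to XZ}$ with $Z$ a finite classical system, $\mathcal{S},\mathcal{D}$ classical channels and $\mathcal{D}(\cdot\otimes\mathbf{e}_z)$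 doubly stochastic for every $z$. $\mathcal{N}\sim\mathcal{M}$ means $\mathcal{N}\succ\mathcal{M}$ and $\mathcal{M}\succ\mathcal{N}$. *)

(* Classical channels as column-stochastic matrices over an
   ordered field R (the paper works over the reals; the statement is purely
   order-algebraic, so we state it for every realFieldType). *)
From HB Require Import structures.
From mathcomp Require Import all_boot all_order all_algebra.
Set Implicit Arguments. Unset Strict Implicit. Unset Printing Implicit Defensive.
Import Order.TTheory GRing.Theory Num.Theory.
Local Open Scope ring_scope.

Section Defs.
Variable R : realFieldType.

Definition ksum (n : nat) (p : 'I_n -> R) (k : nat) : R :=
  \big[Num.max/0]_(S : {set 'I_n} | #|S| == k) \sum_(i in S) p i.

Definition vmaj (n : nat) (p q : 'I_n -> R) : Prop :=
  forall k : nat, (1 <= k <= n)%N -> ksum q k <= ksum p k.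

(* N : n x m column-stochastic transition matrix (channel X -> Y, |X|=m, |Y|=n) *)
Definition is_chan (n m : nat) (N : 'M[R]_(n, m)) : Prop :=
  (forall y x, 0 <= N y x) /\ (forall x, \sum_(y < n) N y x = 1).

Definition colv (n m : nat) (N : 'M[R]_(n, m)) (x : 'I_m) : 'I_n -> R :=
  fun y => N y x.

Definition standard_form (n m : nat) (N : 'M[R]_(n, m)) : Prop :=
  (forall (x : 'I_m) (i j : 'I_n), (i <= j)%N -> N j x <= N i x)
  /\ (forall x x1 : 'I_m, val x1 = (val x).+1 ->
        exists l : nat, (1 <= l <= n)%N /\
          (forall k : nat, (1 <= k)%N -> (k < l)%N ->
             ksum (colv N x) k = ksum (colv N x1) k) /\
          ksum (colv N x1) l < ksum (colv N x) l)
  /\ (forall x : 'I_m,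
        ~ exists lam : 'I_m -> R,
            (forall y, 0 <= lam y) /\ lam x = 0 /\ \sum_(y < m) lam y = 1 /\
            vmaj (fun i => \sum_(y < m) lam y * N i y) (colv N x)).

Definition theta (n m m' k : nat) (N : 'M[R]_(n, m))
  (S : 'I_m -> 'I_k -> 'I_m' -> R) (D : 'I_n -> 'I_n -> 'I_k -> R)
  : 'M[R]_(n, m') :=
  \matrix_(y < n, x' < m')
    \sum_(x < m) \sum_(z < k) \sum_(y' < n) D y y' z * N y' x * S x z x'.

Definition is_chanS (m m' k : nat) (S : 'I_m -> 'I_k -> 'I_m' -> R) : Prop :=
  (forall x z x', 0 <= S x z x') /\
  (forall x', \sum_(x < m) \sum_(z < k) S x z x' = 1).

Definition is_dsD (n k : nat) (D : 'I_n -> 'I_n -> 'I_k -> R) : Prop :=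
  (forall y y' z, 0 <= D y y' z) /\
  (forall y' z, \sum_(y < n) D y y' z = 1) /\
  (forall y z, \sum_(y' < n) D y y' z = 1).

Definition chan_maj (n m m' : nat) (N : 'M[R]_(n, m)) (M : 'M[R]_(n, m')) : Prop :=
  exists (k : nat) (S : 'I_m -> 'I_k -> 'I_m' -> R) (D : 'I_n -> 'I_n -> 'I_k -> R),
    is_chanS S /\ is_dsD D /\ M = theta N S D.

Definition chan_equiv (n m m' : nat) (N : 'M[R]_(n, m)) (M : 'M[R]_(n, m')) : Prop :=
  chan_maj N M /\ chan_maj M N.

End Defs.

From HB Require Import structures.
From mathcomp Require Import all_boot all_order all_algebra ring zify.
Set Implicit Arguments. Unset Strict Implicit. Unset Printing Implicit Defensive.
Import Order.TTheory GRing.Theory Num.Theory.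
Local Open Scope ring_scope.

(** A channel majorization [N \succ M] yields a row-stochastic matrix [A] with
    [||M_x'||_(k) <= sum_x A x' x * ||N_x||_(k)] for all Ky Fan norms: a doubly
    stochastic post-processing can only lower Ky Fan norms of a sorted vector,
    and Ky Fan norms are convex.  If [N ~ M], composing both directions gives a
    row-stochastic [C] with [||N_x||_(k) <= sum_y C x y * ||N_y||_(k)]; condition
    (3) of the standard form forbids any off-diagonal weight, so the two
    stochastic matrices are mutually inverse permutation matrices and matched
    columns have equal Ky Fan norms.  Condition (2) orders the columns strictly
    lexicographically by their Ky Fan norms, so the permutation is increasing,
    hence the identity; finally condition (1) makes each column the sorted
    vector determined by its Ky Fan norms. *)

Lemma ord_homo_ltn_id m (f : 'I_m -> 'I_m) : {homo f : x y / (x < y)%N} -> f =1 id.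
Proof.
have le_homo (g : 'I_m -> 'I_m) : {homo g : x y / (x < y)%N} -> forall x : 'I_m, (x <= g x)%N.
  move=> g_incr [i lt_im]; elim: i lt_im => [|i IHi] lt_im //.
  have lt_im' := ltnW lt_im.
  exact: leq_ltn_trans (IHi lt_im') (g_incr (Ordinal lt_im') (Ordinal lt_im) (ltnSn i)).
move=> f_incr x; apply: val_inj; apply/eqP; rewrite eqn_leq (le_homo f f_incr) andbT.
have rev_incr : {homo (fun y => rev_ord (f (rev_ord y))) : y z / (y < z)%N}.
  move=> y z yz; have := f_incr (rev_ord z) (rev_ord y).
  have := ltn_ord z; have := ltn_ord (f (rev_ord y)); rewrite /=; lia.
(* [rev_ord] conjugates [f] into an increasing map, for which [le_homo] gives [f x <= x]. *)
have := le_homo _ rev_incr (rev_ord x); rewrite rev_ordK /=.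
have := ltn_ord x; have := ltn_ord (f x); lia.
Qed.

Section KyFanNorms.
Variables (R : realFieldType) (n : nat).
Implicit Types (p q w : 'I_n -> R) (k : nat).

Definition noninc p := forall i j : 'I_n, (i <= j)%N -> p j <= p i.

Definition psum p k := \sum_(j < n | (j < k)%N) p j.

Lemma eq_ksum p q k : p =1 q -> ksum p k = ksum q k.
Proof. by move=> pq; apply: eq_bigr => S _; apply: eq_bigr => i _; rewrite pq. Qed.

Lemma card_ord_lt k : (k <= n)%N -> #|[set j : 'I_n | (j < k)%N]| = k.
Proof.
move=> kn; rewrite -sum1_card.
under eq_bigl => j do rewrite inE.
by rewrite -(big_ord_widen (idx:=0%N) (op:=addn) n (fun _ => 1%N) kn) sum1_card card_ord.
Qed.

Lemma psum_indicator p k : psum p k = \sum_(j < n) (j < k)%N%:R * p j.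
Proof. by rewrite /psum big_mkcond; apply: eq_bigr => j _; case: ifP; rewrite ?mul1r ?mul0r. Qed.

Lemma sum_indicator k : (k <= n)%N -> \sum_(j < n) (j < k)%N%:R = k%:R :> R.
Proof.
move=> kn; rewrite -natr_sum -[in RHS](card_ord_lt kn) -sum1_card [in RHS]big_mkcond /=.
by congr _%:R; apply: eq_bigr => j _; rewrite inE; case: (j < k)%N.
Qed.

(* The weights [w] describe a fractional choice of [k] entries; the largest
   entries are the best choice because [(w j - [j < k]) * (p j - p (k - 1)) <= 0]
   for every [j]. *)
Lemma weighted_sum_le_psum p w k : noninc p -> (k <= n)%N ->
  (forall j, 0 <= w j <= 1) -> \sum_j w j = k%:R ->
  \sum_j w j * p j <= psum p k.
Proof.
move=> p_noninc kn w01; case: k kn => [|k] kn sw.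
  have w0 j : w j = 0.
    by apply: (psumr_eq0P (P := predT)) => // i _; case/andP: (w01 i).
  by rewrite /psum big1 => [|j _]; rewrite ?big_pred0 ?w0 ?mul0r.
set c := p (Ordinal kn); set e := fun j : 'I_n => (j < k.+1)%N%:R : R.
rewrite -subr_le0.
have -> : \sum_j w j * p j - psum p k.+1 = \sum_j (w j - e j) * (p j - c).
  under [RHS]eq_bigr => j _ do rewrite mulrBr !mulrBl.
  rewrite !sumrB -!mulr_suml sw sum_indicator // psum_indicator; ring.
apply: sumr_le0 => j _; rewrite /e.
case/andP: (w01 j) => w0 w1; case: ltnP => jk /=.
- by rewrite mulr_le0_ge0 ?subr_le0 ?subr_ge0 //; apply: p_noninc; rewrite -ltnS.
- by rewrite subr0 mulr_ge0_le0 ?subr_le0 //; apply: p_noninc; apply: ltnW.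
Qed.

Lemma ksum_ge0 q k : 0 <= ksum q k.
Proof. by apply: (big_rec (fun x => 0 <= x)) => // S x _ x0; rewrite le_max x0 orbT. Qed.

Lemma ksum_le q k c : 0 <= c ->
  (forall S : {set 'I_n}, #|S| = k -> \sum_(i in S) q i <= c) -> ksum q k <= c.
Proof. by move=> c0 Hc; apply: bigmax_le => // S /eqP; apply: Hc. Qed.

Lemma le_ksum q k (S : {set 'I_n}) : #|S| = k -> \sum_(i in S) q i <= ksum q k.
Proof.
by move=> cS; apply: (le_bigmax_cond _ (fun S : {set 'I_n} => \sum_(i in S) q i)); apply/eqP.
Qed.

Lemma psum_le_ksum q k : (k <= n)%N -> psum q k <= ksum q k.
Proof.
move=> kn; apply: le_trans (le_ksum q (card_ord_lt kn)).
by rewrite le_eqVlt /psum; apply/orP; left; apply/eqP; apply: eq_bigl => j; rewrite inE.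
Qed.

Lemma ksum_noninc p k : noninc p -> (forall j, 0 <= p j) -> (k <= n)%N ->
  ksum p k = psum p k.
Proof.
move=> p_noninc p0 kn; apply/eqP; rewrite eq_le psum_le_ksum // andbT.
apply: ksum_le => [|S cS]; first exact: sumr_ge0.
have -> : \sum_(i in S) p i = \sum_j (j \in S)%:R * p j.
  by rewrite big_mkcond; apply: eq_bigr => j _; case: ifP; rewrite ?mul1r ?mul0r.
apply: weighted_sum_le_psum => // [j|]; first by case: (j \in S); rewrite ?ler01 ?lexx.
rewrite -cS -sum1_card natr_sum [RHS]big_mkcond; apply: eq_bigr => j _; by case: ifP.
Qed.

Lemma psumS p (j : 'I_n) : psum p j.+1 = psum p j + p j.
Proof.
rewrite /psum (bigD1 j) //= addrC; congr (_ + _); apply: eq_bigl => i.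
by rewrite ltnS leq_eqVlt -val_eqE; case: ltngtP.
Qed.

Lemma noninc_ksum_inj p q : noninc p -> noninc q ->
  (forall j, 0 <= p j) -> (forall j, 0 <= q j) ->
  (forall k, (1 <= k <= n)%N -> ksum p k = ksum q k) -> forall j, p j = q j.
Proof.
move=> p_noninc q_noninc p0 q0 pq.
have psumE k : (k <= n)%N -> psum p k = psum q k.
  case: k => [|k] kn; first by rewrite /psum !big_pred0.
  by rewrite -!ksum_noninc // pq.
by move=> j; apply/(addrI (psum p j)); rewrite -psumS psumE // psumS psumE // ltnW.
Qed.

Lemma ksum_conic_le (I : finType) (c : I -> R) (v : I -> 'I_n -> R) k :
  (forall i, 0 <= c i) ->
  ksum (fun y => \sum_i c i * v i y) k <= \sum_i c i * ksum (v i) k.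
Proof.
move=> c0; apply: ksum_le => [|S cS].
  by apply: sumr_ge0 => i _; rewrite mulr_ge0 ?ksum_ge0.
rewrite exchange_big; apply: ler_sum => i _.
by rewrite -mulr_sumr ler_wpM2l // le_ksum.
Qed.

Lemma conic_ksum_le (I : finType) (c : I -> R) (v : I -> 'I_n -> R) k :
  (forall i, 0 <= c i) -> (forall i, noninc (v i)) -> (forall i y, 0 <= v i y) ->
  (k <= n)%N ->
  \sum_i c i * ksum (v i) k <= ksum (fun y => \sum_i c i * v i y) k.
Proof.
move=> c0 v_noninc v0 kn; apply: le_trans (psum_le_ksum _ kn).
rewrite /psum exchange_big le_eqVlt; apply/orP; left; apply/eqP.
by apply: eq_bigr => i _; rewrite ksum_noninc // mulr_sumr.
Qed.

Lemma ksum_doubly_stochastic_le (D : 'I_n -> 'I_n -> R) p k :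
  (forall y y', 0 <= D y y') -> (forall y', \sum_y D y y' = 1) ->
  (forall y, \sum_y' D y y' = 1) ->
  noninc p -> (forall y, 0 <= p y) -> (k <= n)%N ->
  ksum (fun y => \sum_y' D y y' * p y') k <= ksum p k.
Proof.
move=> D0 D_col D_row p_noninc p0 kn; apply: ksum_le => [|S cS]; first exact: ksum_ge0.
rewrite exchange_big /= ksum_noninc //.
under eq_bigr => y' _ do rewrite -mulr_suml.
apply: weighted_sum_le_psum => // [y'|].
  rewrite sumr_ge0 //= -(D_col y') [leRHS](bigID (mem S)) /= lerDl.
  exact: sumr_ge0.
by rewrite exchange_big -cS -sum1_card natr_sum; apply: eq_bigr => y _; rewrite D_row.
Qed.

End KyFanNorms.

Section RowStochastic.
Variable R : realFieldType.

Lemma sum_delta (I : finType) (v : I -> R) i : \sum_j (j == i)%:R * v j = v i.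
Proof. by rewrite (bigD1 i) //= eqxx mul1r big1 ?addr0 // => j /negbTE ->; rewrite mul0r. Qed.

Definition row_stochastic p q (A : 'M[R]_(p, q)) : Prop :=
  (forall i j, 0 <= A i j) /\ (forall i, \sum_j A i j = 1).

Lemma row_stochasticM p q r (A : 'M[R]_(p, q)) (B : 'M[R]_(q, r)) :
  row_stochastic A -> row_stochastic B -> row_stochastic (A *m B).
Proof.
move=> [A0 A1] [B0 B1]; split=> [i j|i]; rewrite ?mxE.
  by apply: sumr_ge0 => l _; apply: mulr_ge0.
under eq_bigr => j _ do rewrite mxE.
by rewrite exchange_big /= -(A1 i); apply: eq_bigr => l _; rewrite -mulr_sumr B1 mulr1.
Qed.

Section Rows.
Variables (p q : nat) (A : 'M[R]_(p, q)).
Hypothesis A_stoch : row_stochastic A.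

Lemma row_stochastic_le1 i j : A i j <= 1.
Proof.
case: A_stoch => A0 A1; rewrite -(A1 i) (bigD1 j) //= lerDl.
by apply: sumr_ge0 => l _.
Qed.

Lemma row_stochastic_delta i j : A i j = 1 -> forall l, A i l = (l == j)%:R.
Proof.
case: A_stoch => A0 A1 Aij l.
have off_j : \sum_(l | l != j) A i l = 0.
  by apply: (@addrI _ (A i j)); rewrite addr0 {2}Aij -(A1 i) [in RHS](bigD1 j).
case: eqVneq => [->//|lj]; exact: (psumr_eq0P (fun l _ => A0 i l) off_j).
Qed.

Lemma row_stochastic_neq0 i : exists j, A i j != 0.
Proof.
case: A_stoch => _ A1; case: (pickP (fun j => A i j != 0)) => [j Aij|A_0]; first by exists j.
have := A1 i; rewrite big1 => [/eqP|j _]; first by rewrite eq_sym oner_eq0.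
exact/eqP/negbFE/A_0.
Qed.

End Rows.

(* A convex combination of numbers [<= 1] equals [1] only if every number
   carrying positive weight is [1]. *)
Lemma mulmx_diag1 p q (A : 'M[R]_(p, q)) (B : 'M[R]_(q, p)) i j :
  row_stochastic A -> row_stochastic B -> (A *m B) i i = 1 -> A i j != 0 -> B j i = 1.
Proof.
move=> A_stoch B_stoch ABii Aij; have [A0 A1] := A_stoch.
have defect0 : \sum_l A i l * (1 - B l i) = 0.
  under eq_bigr => l _ do rewrite mulrBr mulr1.
  by rewrite sumrB A1 -ABii mxE subrr.
have defect_ge0 l : predT l -> 0 <= A i l * (1 - B l i).
  by move=> _; rewrite mulr_ge0 ?subr_ge0 ?(row_stochastic_le1 B_stoch).
move: (psumr_eq0P defect_ge0 defect0 (isT : predT j)).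
by move/eqP; rewrite mulf_eq0 (negbTE Aij) subr_eq0 => /eqP <-.
Qed.

Lemma mulmx_diag1_delta p q (A : 'M[R]_(p, q)) (B : 'M[R]_(q, p)) :
  row_stochastic A -> row_stochastic B ->
  (forall i, (A *m B) i i = 1) -> (forall j, (B *m A) j j = 1) ->
  exists f : 'I_p -> 'I_q,
    (forall i j, A i j = (j == f i)%:R) /\ (forall i j, B (f i) j = (j == i)%:R).
Proof.
move=> A_stoch B_stoch AB1 BA1.
have [f Af_neq0] := fin_all_exists (row_stochastic_neq0 A_stoch).
have Bf1 i : B (f i) i = 1 := mulmx_diag1 A_stoch B_stoch (AB1 i) (Af_neq0 i).
have Af1 i : A i (f i) = 1.
  by apply: (mulmx_diag1 B_stoch A_stoch (BA1 (f i))); rewrite Bf1 oner_eq0.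
by exists f; split=> i; apply: row_stochastic_delta.
Qed.

Lemma mulmx_diag1_bij p q (A : 'M[R]_(p, q)) (B : 'M[R]_(q, p)) :
  row_stochastic A -> row_stochastic B ->
  (forall i, (A *m B) i i = 1) -> (forall j, (B *m A) j j = 1) ->
  exists2 f : 'I_p -> 'I_q, bijective f &
    (forall i j, A i j = (j == f i)%:R) /\ (forall i j, B (f i) j = (j == i)%:R).
Proof.
move=> A_stoch B_stoch AB1 BA1.
have [f [Af Bf]] := mulmx_diag1_delta A_stoch B_stoch AB1 BA1.
have [g [Bg Ag]] := mulmx_diag1_delta B_stoch A_stoch BA1 AB1.
exists f => //; exists g => [i|j].
  have := Bg (f i) i; rewrite Bf eqxx.
  by case: eqP => [<-|_ /eqP]; rewrite ?eqr_nat.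
have := Af (g j) j; rewrite Ag eqxx.
by case: eqP => [<-|_ /eqP]; rewrite ?eqr_nat.
Qed.

End RowStochastic.

Section KyFanProfiles.
Variables (R : realFieldType) (n : nat).

Definition kyfan m (N : 'M[R]_(n, m)) (x : 'I_m) (k : nat) : R := ksum (colv N x) k.

Definition kyfan_bound p q (A : 'M[R]_(p, q))
    (F : 'I_p -> nat -> R) (G : 'I_q -> nat -> R) : Prop :=
  forall i k, (1 <= k <= n)%N -> F i k <= \sum_j A i j * G j k.

Lemma kyfan_boundM p q r (A : 'M[R]_(p, q)) (B : 'M[R]_(q, r)) F G H :
  (forall i j, 0 <= A i j) -> kyfan_bound A F G -> kyfan_bound B G H ->
  kyfan_bound (A *m B) F H.
Proof.
move=> A0 AFG BGH i k hk; apply: le_trans (AFG i k hk) _.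
under [leRHS]eq_bigr => l _ do rewrite mxE mulr_suml.
rewrite exchange_big; apply: ler_sum => j _.
under eq_bigr => l _ do rewrite -mulrA.
by rewrite -mulr_sumr ler_wpM2l ?BGH.
Qed.

Lemma standard_form_noninc m (N : 'M[R]_(n, m)) :
  standard_form N -> forall x, noninc (colv N x).
Proof. by case=> sortedN _ x i j; apply: sortedN. Qed.

Lemma chan_maj_kyfan_bound m m' (N : 'M[R]_(n, m)) (M : 'M[R]_(n, m')) :
  is_chan N -> (forall x, noninc (colv N x)) -> chan_maj N M ->
  exists2 A : 'M[R]_(m', m), row_stochastic A & kyfan_bound A (kyfan M) (kyfan N).
Proof.
move=> [N0 _] N_noninc [l [S [D [[S0 S1] [[D0 [D_col D_row]] ->]]]]].
exists (\matrix_(x', x) \sum_z S x z x').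
  split=> [x' x|x']; rewrite ?mxE; first exact: sumr_ge0.
  by under eq_bigr => x _ do rewrite mxE.
move=> x' k /andP[_ kn].
pose v (xz : 'I_m * 'I_l) y := \sum_y' D y y' xz.2 * N y' xz.1.
have thetaE : colv (theta N S D) x' =1 fun y => \sum_xz S xz.1 xz.2 x' * v xz y.
  move=> y; rewrite /colv mxE pair_big; apply: eq_bigr => -[x z] _ /=.
  by rewrite mulr_sumr; apply: eq_bigr => y' _; rewrite mulrC mulrA.
rewrite /kyfan (eq_ksum _ thetaE).
apply: le_trans (ksum_conic_le v k (fun xz => S0 xz.1 xz.2 x')) _.
under [leRHS]eq_bigr => x _ do rewrite mxE mulr_suml.
rewrite pair_big; apply: ler_sum => -[x z] _ /=.
by rewrite ler_wpM2l // ksum_doubly_stochastic_le //; apply: N_noninc.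
Qed.

(* If [C x x < 1], the off-diagonal part of row [x] of [C], renormalised, is a
   convex combination of the other columns majorizing column [x]. *)
Lemma kyfan_bound_diag1 m (N : 'M[R]_(n, m)) (C : 'M[R]_m) x :
  is_chan N -> standard_form N -> row_stochastic C ->
  kyfan_bound C (kyfan N) (kyfan N) -> C x x = 1.
Proof.
move=> [N0 _] sfN C_stoch CN; have [C0 C1] := C_stoch.
have N_noninc := standard_form_noninc sfN; case: sfN => _ [_ no_domination].
apply/eqP; rewrite eq_le row_stochastic_le1 //= leNgt; apply/negP => Cxx_lt1.
apply: (no_domination x).
set d := 1 - C x x; have d_gt0 : 0 < d by rewrite subr_gt0.
have sum_off : \sum_(y | y != x) C x y = d by rewrite /d -(C1 x) [in RHS](bigD1 x) //= addrC addrK.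
pose lam y := if y == x then 0 else C x y / d.
have lam0 y : 0 <= lam y.
  by rewrite /lam; case: eqP => // _; apply: divr_ge0 (C0 x y) (ltW d_gt0).
have split_row a : \sum_y C x y * a y = C x x * a x + d * \sum_y lam y * a y.
  rewrite (bigD1 x) //= [in RHS](bigD1 x) //= /lam eqxx mul0r add0r mulr_sumr.
  congr (_ + _); apply: eq_bigr => y /negbTE ->.
  by rewrite mulrA [d * _]mulrC divfK ?gt_eqF.
exists lam; split; [exact: lam0 | split; [by rewrite /lam eqxx | split]].
  rewrite (bigD1 x) //= /lam eqxx add0r.
  under eq_bigr => y /negbTE yx do rewrite yx.
  by rewrite -mulr_suml sum_off divff ?gt_eqF.
move=> k /andP[k1 kn].
apply: le_trans (conic_ksum_le lam0 N_noninc (fun y i => N0 i y) kn).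
have := CN x k (introT andP (conj k1 kn)); rewrite split_row -lerBlDl.
by rewrite -{1}[kyfan N x k]mul1r -mulrBl ler_pM2l.
Qed.

(* Oriented so that condition (2) of [standard_form N] is literally
   [lexlt (kyfan N x1) (kyfan N x)]. *)
Definition lexlt (a b : nat -> R) : Prop :=
  exists l, (1 <= l <= n)%N /\ (forall k, (1 <= k)%N -> (k < l)%N -> b k = a k) /\ a l < b l.

Lemma lexlt_trans a b c : lexlt a b -> lexlt b c -> lexlt a c.
Proof.
move=> [l1 [hl1 [e1 lt1]]] [l2 [hl2 [e2 lt2]]].
case: (ltngtP l1 l2) => l12.
- exists l1; split=> //; split; last by rewrite (e2 l1) //; case/andP: hl1.
  by move=> k k1 kl; rewrite e2 ?e1 // (ltn_trans kl l12).
- exists l2; split=> //; split; last by rewrite -(e1 l2) //; case/andP: hl2.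
  by move=> k k1 kl; rewrite e2 ?e1 // (ltn_trans kl l12).
- subst l2; exists l1; split=> //; split; last exact: lt_trans lt1 lt2.
  by move=> k k1 kl; rewrite e2 ?e1.
Qed.

Lemma lexlt_irr a : ~ lexlt a a.
Proof. by move=> [l [_ [_]]]; rewrite ltxx. Qed.

Lemma eq_lexlt a a' b b' : (forall k, (1 <= k <= n)%N -> a k = a' k) ->
  (forall k, (1 <= k <= n)%N -> b k = b' k) -> lexlt a b -> lexlt a' b'.
Proof.
move=> aa' bb' [l [hl [e lt_ab]]]; case/andP: (hl) => l1 ln.
have kn k : (k < l)%N -> (k <= n)%N by move=> kl; exact: ltnW (leq_trans kl ln).
exists l; split=> //; split; last by rewrite -aa' // -bb'.
by move=> k k1 kl; rewrite -aa' ?k1 ?kn // -bb' ?k1 ?kn // e.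
Qed.

Lemma standard_form_lexlt m (N : 'M[R]_(n, m)) (x y : 'I_m) :
  standard_form N -> (x < y)%N -> lexlt (kyfan N y) (kyfan N x).
Proof.
case=> _ [adjacent _] xy; have [d] : exists d, val y = (x + d.+1)%N.
  by exists (y - x.+1)%N; rewrite addnS -addSn subnKC.
elim: d y {xy} => [|d IHd] y y_def; first by apply: adjacent; rewrite y_def addn1.
have lt_m : (x + d.+1 < m)%N by have := ltn_ord y; rewrite y_def addnS => /ltnW.
by apply: lexlt_trans (IHd (Ordinal lt_m) erefl); apply: adjacent; rewrite y_def addnS.
Qed.

Lemma kyfan_eq_homo m m' (N : 'M[R]_(n, m)) (M : 'M[R]_(n, m')) (f : 'I_m -> 'I_m') :
  standard_form N -> standard_form M ->
  (forall x k, (1 <= k <= n)%N -> kyfan N x k = kyfan M (f x) k) ->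
  {homo f : x y / (x < y)%N}.
Proof.
move=> sfN sfM NfM x y xy; have Nyx := standard_form_lexlt sfN xy.
rewrite ltnNge leq_eqVlt; apply/negP => /orP[/eqP/val_inj fyx | fyx].
  by apply: (@lexlt_irr (kyfan N x)); apply: eq_lexlt Nyx => k hk; rewrite !NfM ?fyx.
apply: (@lexlt_irr (kyfan N x)); apply: lexlt_trans Nyx.
by apply: eq_lexlt (standard_form_lexlt sfM fyx) => k hk; rewrite NfM.
Qed.

Lemma eq_standard_form_kyfan m (N M : 'M[R]_(n, m)) :
  is_chan N -> is_chan M -> standard_form N -> standard_form M ->
  (forall x k, (1 <= k <= n)%N -> kyfan N x k = kyfan M x k) -> N = M.
Proof.
move=> [N0 _] [M0 _] sfN sfM NM; apply/matrixP => y x.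
apply: (noninc_ksum_inj (standard_form_noninc sfN x) (standard_form_noninc sfM x))
  => [i|i|k hk]; [exact: N0 | exact: M0 | exact: NM].
Qed.

End KyFanProfiles.

Lemma chan_maj_refl (R : realFieldType) n m (N : 'M[R]_(n, m)) : chan_maj N N.
Proof.
exists 1%N, (fun x _ x' => (x == x')%:R), (fun y y' _ => (y == y')%:R).
split; [|split].
- split=> [x z x'|x']; first exact: ler0n.
  rewrite -[RHS](@sum_delta _ _ (fun _ => 1) x'); apply: eq_bigr => x _.
  by rewrite big_ord1 mulr1.
- split=> [y y' z|]; first exact: ler0n.
  split=> [y' z|y z].
    by rewrite -[RHS](@sum_delta _ _ (fun _ => 1) y'); apply: eq_bigr => y _; rewrite mulr1.
  rewrite -[RHS](@sum_delta _ _ (fun _ => 1) y); apply: eq_bigr => y' _.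
  by rewrite mulr1 eq_sym.
- apply/matrixP => y x'; rewrite /theta mxE -[LHS](@sum_delta _ _ (N y) x').
  apply: eq_bigr => x _; rewrite big_ord1 (bigD1 y) //= eqxx mul1r big1 ?addr0.
    by rewrite mulrC.
  by move=> y' /negbTE; rewrite eq_sym => ->; rewrite !mul0r.
Qed.

Theorem theorem6 (R : realFieldType) (n m m' : nat)
  (N : 'M[R]_(n, m)) (M : 'M[R]_(n, m')) :
  is_chan N -> is_chan M -> standard_form N -> standard_form M ->
  (chan_equiv N M <-> exists e : m = m', castmx (erefl n, e) N = M).
Proof.
move=> cN cM sfN sfM; split=> [[NM MN]|[e <-]]; last first.
  by subst m'; rewrite castmx_id; split; apply: chan_maj_refl.
have [A A_stoch MA] := chan_maj_kyfan_bound cN (standard_form_noninc sfN) NM.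
have [B B_stoch NB] := chan_maj_kyfan_bound cM (standard_form_noninc sfM) MN.
have [[A0 _] [B0 _]] := (A_stoch, B_stoch).
have BA1 x : (B *m A) x x = 1.
  exact: kyfan_bound_diag1 cN sfN (row_stochasticM B_stoch A_stoch) (kyfan_boundM B0 NB MA).
have AB1 x' : (A *m B) x' x' = 1.
  exact: kyfan_bound_diag1 cM sfM (row_stochasticM A_stoch B_stoch) (kyfan_boundM A0 MA NB).
have [f f_bij [Bf Af]] := mulmx_diag1_bij B_stoch A_stoch BA1 AB1.
have NfM x k : (1 <= k <= n)%N -> kyfan N x k = kyfan M (f x) k.
  move=> hk; apply/le_anti/andP; split.
    by have := NB x k hk; under eq_bigr do rewrite Bf; rewrite sum_delta.
  by have := MA (f x) k hk; under eq_bigr do rewrite Af; rewrite sum_delta.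
have e : m = m' by rewrite -(card_ord m) -(card_ord m') (bij_eq_card f_bij).
subst m'; exists erefl; rewrite castmx_id.
apply: eq_standard_form_kyfan => // x k hk.
by rewrite NfM // (ord_homo_ltn_id (kyfan_eq_homo sfN sfM NfM)).
Qed.
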